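(* Let $\mathbf{A}\in\mathbb{R}^{m\times n}$, let $f_x(\mathbf{x})=\sum_{j=1}^n f_{x_j}(x_j)$ and $f_z(\mathbf{z})=\sum_{i=1}^m f_{z_i}(z_i)$, and let $L(\mathbf{x},\mathbf{z},\mathbf{s}) := f_x(\mathbf{x})+f_z(\mathbf{z})+\mathbf{s}^T(\mathbf{z}-\mathbf{A}\mathbf{x})$ be the Lagrangian of the problem $\min_{\mathbf{x},\mathbf{z}} f_x(\mathbf{x})+f_z(\mathbf{z})$ s.t. $\mathbf{z}=\mathbf{A}\mathbf{x}$. Then the iterates of max-sum GAMP (described in the context) satisfy, for every $t\ge 0$, $$\mathbf{x}^{t+1}=\arg\min_{\mathbf{x}}\Big[L(\mathbf{x},\mathbf{z}^t,\mathbf{s}^t)+\tfrac12\|\mathbf{x}-\mathbf{x}^t\|^2_{\boldsymbol{\tau}_r^t}\Big],$$ $$\mathbf{z}^{t+1}=\arg\min_{\mathbf{z}}\Big[L(\mathbf{x}^{t+1},\mathbf{z},\mathbf{s}^t)+\tfrac12\|\mathbf{z}-\mathbf{A}\mathbf{x}^{t+1}\|^2_{\boldsymbol{\tau}_p^{t+1}}\Big],$$ $$\mathbf{s}^{t+1}=\mathbf{s}^t+\frac{1}{\boldsymbol{\tau}_p^{t+1}}(\mathbf{z}^{t+1}-\mathbf{A}\mathbf{x}^{t+1})\quad(\text{componentwise}).$$ Moreover, if $(\hat{\mathbf{x}},\hat{\mathbf{z}},\mathbf{s},\boldsymbol{\tau}_x,\boldsymbol{\tau}_s)$ is a fixed point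 of max-sum GAMP, then it is a critical point of the constrained optimization, in the sense that $\hat{\mathbf{z}}=\mathbf{A}\hat{\mathbf{x}}$ and $$\frac{\partial}{\partial\mathbf{x}}L(\hat{\mathbf{x}},\hat{\mathbf{z}},\mathbf{s})=\mathbf{0},\qquad \frac{\partial}{\partial\mathbf{z}}L(\hat{\mathbf{x}},\hat{\mathbf{z}},\mathbf{s})=\mathbf{0}.$$ In addition, the quadratic terms $\boldsymbol{\tau}_x,\boldsymbol{\tau}_s$ at the fixed point are the approximate diagonals of the matrices $\mathbf{Q}_x$ and $\mathbf{Q}_z$ evaluated at $(\mathbf{x},\mathbf{z})=(\hat{\mathbf{x}},\hat{\mathbf{z}})$, i.e. they satisfy $\frac{1}{\boldsymbol{\tau}_x}=\mathbf{d}_x+\mathbf{S}^T\boldsymbol{\tau}_s$ and $\frac{1}{\boldsymbol{\tau}_s}=\frac{1}{\mathbf{d}_z}+\mathbf{S}\boldsymbol{\tau}_x$ (componentwise inverses).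
   Context: All vector-vector products, quotients and inverses are componentwise. For positive $\boldsymbol{\tau}\in\mathbb{R}^r$ and $\mathbf{v}\in\mathbb{R}^r$, $\|\mathbf{v}\|^2_{\boldsymbol{\tau}}:=\sum_{i}|v_i|^2/\tau_i$. For a scalar function $g$, $\mathrm{prox}_g(v):=\arg\min_{u\in\mathbb{R}} g(u)+\tfrac12|u-v|^2$ and $\mathrm{prox}'_g$ denotes its derivative in $v$; the scalar functions $f_{x_j},f_{z_i}$ are assumed twice differentiable and such that all proximal operators and quantities below are well defined (unique minimizers, positive step sizes). $\mathbf{S}:=|\mathbf{A}|^2$ (entrywise squared magnitude). Max-sum GAMP: initialize $\mathbf{x}^0$, positive $\boldsymbol{\tau}_x^0$, and $\mathbf{s}^{-1}=\mathbf{0}$. For $t=0,1,2,\dots$: $\boldsymbol{\tau}_p^t=\mathbf{S}\boldsymbol{\tau}_x^t$; $\mathbf{p}^t=\mathbf{A}\mathbf{x}^t-\mathbf{s}^{t-1}\boldsymbol{\tau}_p^t$; $z_i^t=\mathrm{prox}_{\tau_{p_i}^t f_{z_i}}(p_i^t)$ and $\tau_{z_i}^t=\tau_{p_i}^t\,\mathrm{prox}'_{\tau_{p_i}^t f_{z_i}}(p_i^t)$ for each $i$; $\mathbf{s}^t=(\mathbf{z}^t-\mathbf{p}^t)/\boldsymbol{\tau}_p^t$; $\boldsymbol{\tau}_s^t=1/\boldsymbol{\tau}_p^t-\boldsymbol{\tau}_z^t/(\boldsymbol{\tau}_p^t)^2$; $\boldsymbol{\tau}_r^t=1/(\mathbf{S}^T\boldsymbol{\tau}_s^t)$;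 $\mathbf{r}^t=\mathbf{x}^t+\boldsymbol{\tau}_r^t\mathbf{A}^T\mathbf{s}^t$; $x_j^{t+1}=\mathrm{prox}_{\tau_{r_j}^t f_{x_j}}(r_j^t)$ and $\tau_{x_j}^{t+1}=\tau_{r_j}^t\,\mathrm{prox}'_{\tau_{r_j}^t f_{x_j}}(r_j^t)$ for each $j$. A fixed point is a set of values of these quantities left unchanged by an iteration ($\mathbf{x}^t=\hat{\mathbf{x}}$, $\mathbf{z}^t=\hat{\mathbf{z}}$, $\mathbf{s}^t=\mathbf{s}$, and constant quadratic terms). At $(\mathbf{x},\mathbf{z})$ let $\mathbf{d}_x:=\partial^2 f_x(\mathbf{x})/\partial\mathbf{x}^2$ and $\mathbf{d}_z:=\partial^2 f_z(\mathbf{z})/\partial\mathbf{z}^2$ be the vectors of componentwise second derivatives, and $\mathbf{Q}_x:=(\mathrm{diag}(\mathbf{d}_x)+\mathbf{A}^T\mathrm{diag}(\mathbf{d}_z)\mathbf{A})^{-1}$, $\mathbf{Q}_z:=(\mathrm{diag}(\mathbf{d}_z)^{-1}+\mathbf{A}\,\mathrm{diag}(\mathbf{d}_x)^{-1}\mathbf{A}^T)^{-1}$. For positive $\mathbf{d}_x,\mathbf{d}_z$, the approximate diagonals of $\mathbf{Q}_x$ and $\mathbf{Q}_z$ are the positive vectors $\boldsymbol{\xi}_x\in\mathbb{R}^n$, $\boldsymbol{\xi}_z\in\mathbb{R}^m$ solving $1/\boldsymbol{\xi}_z=1/\mathbf{d}_z+\mathbf{S}\boldsymbol{\xi}_x$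 and $1/\boldsymbol{\xi}_x=\mathbf{d}_x+\mathbf{S}^T\boldsymbol{\xi}_z$. *)

From HB Require Import structures.
From mathcomp Require Import all_boot all_order all_algebra.
From mathcomp Require Import all_classical all_reals all_analysis.
Set Implicit Arguments.
Unset Strict Implicit.
Unset Printing Implicit Defensive.
Import Order.TTheory GRing.Theory Num.Theory.
Local Open Scope ring_scope.
Local Open Scope classical_set_scope.

Definition mulv (R : realType) (m n : nat) (A : 'M[R]_(m, n)) (x : 'I_n -> R)
  : 'I_m -> R := fun i => \sum_(j < n) A i j * x j.

Definition mulvT (R : realType) (m n : nat) (A : 'M[R]_(m, n)) (s : 'I_m -> R)
  : 'I_n -> R := fun j => \sum_(i < m) A i j * s i.

Definition Smat (R : realType) (m n : nat) (A : 'M[R]_(m, n)) : 'M[R]_(m, n) :=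
  map_mx (fun a => `|a| ^+ 2) A.

Definition is_prox_min (R : realType) (g : R -> R) (v u : R) : Prop :=
  forall w, g u + (u - v) ^+ 2 / 2 <= g w + (w - v) ^+ 2 / 2.

(* prox_g(v) := argmin_u g(u) + 1/2 |u - v|^2  (the chosen minimizer; it is
   unique under the hypotheses of the theorem). *)
Definition prox (R : realType) (g : R -> R) (v : R) : R :=
  xget 0 [set u | is_prox_min g v u].

Definition dprox (R : realType) (g : R -> R) (v : R) : R := derive1 (prox g) v.

Definition scalef (R : realType) (tau : R) (f : R -> R) : R -> R :=
  fun u => tau * f u.

Record gamp_out (R : realType) (m n : nat) := GampOut {
  g_taup : 'I_m -> R;
  g_p : 'I_m -> R;
  g_z : 'I_m -> R;
  g_tauz : 'I_m -> R;
  g_s : 'I_m -> R;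
  g_taus : 'I_m -> R;
  g_taur : 'I_n -> R;
  g_r : 'I_n -> R;
  g_x : 'I_n -> R;
  g_taux : 'I_n -> R
}.

(* One iteration of max-sum GAMP starting from x^t, tau_x^t and s^{t-1}. *)
Definition gamp_step (R : realType) (m n : nat) (A : 'M[R]_(m, n))
  (fx : 'I_n -> R -> R) (fz : 'I_m -> R -> R)
  (x taux : 'I_n -> R) (sprev : 'I_m -> R) : gamp_out R m n :=
  let taup := mulv (Smat A) taux in
  let p := fun i => mulv A x i - sprev i * taup i in
  let z := fun i => prox (scalef (taup i) (fz i)) (p i) in
  let tauz := fun i => taup i * dprox (scalef (taup i) (fz i)) (p i) in
  let s := fun i => (z i - p i) / taup i in
  let taus := fun i => 1 / taup i - tauz i / (taup i) ^+ 2 in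
  let taur := fun j => 1 / mulvT (Smat A) taus j in
  let r := fun j => x j + taur j * mulvT A s j in
  let x' := fun j => prox (scalef (taur j) (fx j)) (r j) in
  let taux' := fun j => taur j * dprox (scalef (taur j) (fx j)) (r j) in
  @GampOut R m n taup p z tauz s taus taur r x' taux'.

(* State (x^t, tau_x^t, s^{t-1}) of the algorithm, with s^{-1} = 0. *)
Fixpoint gamp_state (R : realType) (m n : nat) (A : 'M[R]_(m, n))
  (fx : 'I_n -> R -> R) (fz : 'I_m -> R -> R)
  (x0 taux0 : 'I_n -> R) (t : nat) : ('I_n -> R) * ('I_n -> R) * ('I_m -> R) :=
  match t with
  | O => (x0, taux0, fun _ => 0)
  | t'.+1 =>
      let '(x, tx, sp) := gamp_state A fx fz x0 taux0 t' in
      let o := gamp_step A fx fz x tx sp in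
      (g_x o, g_taux o, g_s o)
  end.

(* All quantities of iteration t (tau_p^t, p^t, z^t, ..., x^{t+1}, tau_x^{t+1}). *)
Definition gamp_iter (R : realType) (m n : nat) (A : 'M[R]_(m, n))
  (fx : 'I_n -> R -> R) (fz : 'I_m -> R -> R)
  (x0 taux0 : 'I_n -> R) (t : nat) : gamp_out R m n :=
  let '(x, tx, sp) := gamp_state A fx fz x0 taux0 t in gamp_step A fx fz x tx sp.

Definition gamp_x (R : realType) (m n : nat) (A : 'M[R]_(m, n))
  (fx : 'I_n -> R -> R) (fz : 'I_m -> R -> R)
  (x0 taux0 : 'I_n -> R) (t : nat) : 'I_n -> R :=
  (gamp_state A fx fz x0 taux0 t).1.1.

Definition lagrangian (R : realType) (m n : nat) (A : 'M[R]_(m, n))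
  (fx : 'I_n -> R -> R) (fz : 'I_m -> R -> R)
  (x : 'I_n -> R) (z s : 'I_m -> R) : R :=
  \sum_(j < n) fx j (x j) + \sum_(i < m) fz i (z i)
  + \sum_(i < m) s i * (z i - mulv A x i).

Definition wnorm2 (R : realType) (k : nat) (tau v : 'I_k -> R) : R :=
  \sum_(i < k) `|v i| ^+ 2 / tau i.

Definition is_argmin (R : realType) (T : Type) (F : T -> R) (u : T) : Prop :=
  forall w, (forall w', F w <= F w') <-> w = u.

Definition upd (R : realType) (k : nat) (v : 'I_k -> R) (j : 'I_k) (a : R)
  : 'I_k -> R := fun l => if l == j then a else v l.

Definition dL_dx (R : realType) (m n : nat) (A : 'M[R]_(m, n))
  (fx : 'I_n -> R -> R) (fz : 'I_m -> R -> R)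
  (x : 'I_n -> R) (z s : 'I_m -> R) (j : 'I_n) : R :=
  derive1 (fun a => lagrangian A fx fz (upd x j a) z s) (x j).

Definition dL_dz (R : realType) (m n : nat) (A : 'M[R]_(m, n))
  (fx : 'I_n -> R -> R) (fz : 'I_m -> R -> R)
  (x : 'I_n -> R) (z s : 'I_m -> R) (i : 'I_m) : R :=
  derive1 (fun a => lagrangian A fx fz x (upd z i a) s) (z i).

(* Fixed point (xh, zh, s, tau_x, tau_s): one iteration started from
   x^t = xh, tau_x^t = tau_x, s^{t-1} = s leaves all of them unchanged. *)
Definition gamp_fixed_point (R : realType) (m n : nat) (A : 'M[R]_(m, n))
  (fx : 'I_n -> R -> R) (fz : 'I_m -> R -> R)
  (xh : 'I_n -> R) (zh s : 'I_m -> R) (taux : 'I_n -> R) (taus : 'I_m -> R)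
  : Prop :=
  let o := gamp_step A fx fz xh taux s in
  [/\ g_x o = xh, g_taux o = taux, g_z o = zh, g_s o = s & g_taus o = taus].

From HB Require Import structures.
From mathcomp Require Import all_boot all_order all_algebra.
From mathcomp Require Import all_classical all_reals all_analysis.
From mathcomp Require Import ring lra.
Set Implicit Arguments.
Unset Strict Implicit.
Unset Printing Implicit Defensive.
Import Order.TTheory GRing.Theory Num.Theory.
Local Open Scope ring_scope.
Local Open Scope classical_set_scope.

(* Expanding the Lagrangian, both updates are separable: coordinate j of the
   x-update minimizes [f(a) + c a + (a - y)^2 / (2 tau)] with [c = -(A^T s)_j],
   [y = x_j], and coordinate i of the z-update does so with [c = s_i],
   [y = (A x)_i]; that scalar problem is solved by [prox_{tau f}(y - tau c)],
   which is exactly what GAMP computes.  At a fixed point, [s = (z - p) / tau_p]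
   together with [p = A x - s tau_p] forces [z = A x]; Fermat's rule for the
   proximal problem [tau f'(prox v) + prox v - v = 0] gives stationarity of L,
   and differentiating that rule in [v] gives [prox' = 1 / (1 + tau f'')], from
   which the two identities for [tau_x] and [tau_s] follow by field algebra. *)

Section FieldIdentities.
Variable F : fieldType.

Lemma dual_fixed_point_feasible (z p tau s y : F) :
  tau != 0 -> s = (z - p) / tau -> p = y - s * tau -> z = y.
Proof.
move=> tau0 ->; rewrite divfK // => hp.
have : z - y = p - (y - (z - p)) by ring.
by rewrite -hp subrr => /eqP; rewrite subr_eq0 => /eqP.
Qed.

Lemma inv_scaled_prox_deriv (tau u d : F) :
  tau != 0 -> u * (1 + tau * d) = 1 -> 1 / (tau * u) = d + 1 / tau.
Proof.
move=> tau0 hu.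
have u0 : u != 0.
  by apply: contraPneq hu => ->; rewrite mul0r => /esym/eqP; rewrite oner_eq0.
have ed : 1 + tau * d = u^-1 by apply: (mulfI u0); rewrite hu mulfV.
have -> : d = (u^-1 - 1) / tau by rewrite -ed; field.
by field; rewrite u0 tau0.
Qed.

Lemma inv_taus_prox_deriv (tau u d : F) :
  tau != 0 -> d != 0 -> u * (1 + tau * d) = 1 ->
  1 / (1 / tau - tau * u / tau ^+ 2) = 1 / d + tau.
Proof.
move=> tau0 d0 hu.
have e0 : 1 + tau * d != 0.
  by apply: contraPneq hu => ->; rewrite mulr0 => /esym/eqP; rewrite oner_eq0.
have -> : u = 1 / (1 + tau * d) by apply: (mulIf e0); rewrite hu div1r mulVf.
by field; rewrite d0 e0 tau0 /= addrAC subrr add0r mulf_neq0.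
Qed.

End FieldIdentities.

Section ScalarProx.
Variable R : realType.
Implicit Types (f g : R -> R) (tau v : R).

Lemma derive1_val f (x d : R) : is_derive x 1 f d -> derive1 f x = d.
Proof. by move=> H; rewrite derive1E derive_val. Qed.

Lemma is_derive_add_linear f (x c C : R) : derivable f x 1 ->
  is_derive x 1 (fun a => f a + c * a + C) (derive1 f x + c).
Proof.
move=> df; have := derivableP df; rewrite -derive1E => Hf.
have -> : (fun a => f a + c * a + C) = f + c \*: (@id R) + cst C by [].
by apply: is_derive_eq; rewrite /GRing.scale /= mulr1 addr0.
Qed.

Lemma is_derive_prox_objective f (x tau v : R) : derivable f x 1 ->
  is_derive x 1 (fun u => tau * f u + (u - v) ^+ 2 / 2) (tau * derive1 f x + (x - v)).
Proof.
move=> df; have := derivableP df; rewrite -derive1E => Hf.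
have -> : (fun u => tau * f u + (u - v) ^+ 2 / 2) =
          tau \*: f + 2^-1 \*: (@id R - cst v) ^+ 2.
  by apply/funext => u; rewrite exprfctE [_ / 2]mulrC.
apply: is_derive_eq.
by rewrite /GRing.scale /= expr1 subr0 mulr1 mulrA mulVf ?mul1r.
Qed.

Lemma proxP g v : (exists! u, is_prox_min g v u) ->
  is_prox_min g v (prox g v) /\ (forall u, is_prox_min g v u -> u = prox g v).
Proof.
case=> u [Hu Huniq].
have Hp : is_prox_min g v (prox g v) by rewrite /prox; apply: xgetPex; exists u.
by split=> // a Ha; rewrite -(Huniq a Ha); apply: Huniq.
Qed.

Lemma prox_stationary f tau v : (forall u, derivable f u 1) ->
  (exists! u, is_prox_min (scalef tau f) v u) ->
  tau * derive1 f (prox (scalef tau f) v) + (prox (scalef tau f) v - v) = 0.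
Proof.
move=> df hu; have [Hmin _] := proxP hu; set c := prox (scalef tau f) v in Hmin *.
have hd u := is_derive_prox_objective tau v (df u).
have H0 : is_derive c 1 (fun u => tau * f u + (u - v) ^+ 2 / 2) 0.
  apply: (@derive1_at_min _ _ (c - 1) (c + 1)) => //.
  - lra.
  - by rewrite in_itv /=; apply/andP; split; lra.
  - by move=> t _; exact: Hmin.
by rewrite -(derive1_val (hd c)) (derive1_val H0).
Qed.

Lemma prox_fixed_deriv f tau (x c : R) : 0 < tau -> (forall u, derivable f u 1) ->
  (exists! u, is_prox_min (scalef tau f) (x + tau * c) u) ->
  prox (scalef tau f) (x + tau * c) = x -> derive1 f x = c.
Proof.
move=> tau0 df hu px; have := prox_stationary df hu; rewrite px.
have -> : tau * derive1 f x + (x - (x + tau * c)) = tau * (derive1 f x - c) by ring.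
by move/eqP; rewrite mulf_eq0 gt_eqF //= subr_eq0 => /eqP.
Qed.

(* Implicit differentiation of [prox_stationary] in [v]. *)
Lemma dprox_curvature f tau v :
  (forall u, derivable f u 1 /\ derivable (derive1 f) u 1) ->
  (forall w, exists! u, is_prox_min (scalef tau f) w u) ->
  derivable (prox (scalef tau f)) v 1 ->
  dprox (scalef tau f) v * (1 + tau * derive1 (derive1 f) (prox (scalef tau f) v)) = 1.
Proof.
move=> df hu dP; set P := prox (scalef tau f).
have stat : tau \*: (derive1 f \o P) + (P - @id R) = cst 0.
  by apply/funext => w; exact: (prox_stationary (fun u => (df u).1) (hu w)).
have dfP := (df (P v)).2.
have Hcomp : is_derive v 1 (derive1 f \o P) (derive1 (derive1 f) (P v) * derive1 P v).
  apply: DeriveDef; last by rewrite -derive1E; exact: derive1_comp.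
  by apply/derivable1_diffP; apply: differentiable_comp; apply/derivable1_diffP.
have HP := derivableP dP; rewrite -derive1E in HP.
have Hsum := is_deriveD (is_deriveZ tau Hcomp) (is_deriveB HP (@is_derive_id R R v 1)).
have E : tau * (derive1 (derive1 f) (P v) * derive1 P v) + (derive1 P v - 1) = 0.
  by rewrite -(derive1_val Hsum) stat derive1_cst.
rewrite /dprox -/P; lra.
Qed.

Lemma prox_argmin_linear_quadratic f (tau c y : R) : 0 < tau ->
  (exists! u, is_prox_min (scalef tau f) (y - tau * c) u) ->
  let G := fun a => f a + c * a + (a - y) ^+ 2 / tau / 2 in
  let u := prox (scalef tau f) (y - tau * c) in
  (forall a, G u <= G a) /\ (forall a, (forall b, G a <= G b) -> a = u).
Proof.
move=> tau0 hu G u; have [Hu Huniq] := proxP hu.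
have shift a : tau * G a = (scalef tau f a + (a - (y - tau * c)) ^+ 2 / 2)
                          + (tau * c * y - tau ^+ 2 * c ^+ 2 / 2).
  by rewrite /G /scalef; field; rewrite gt_eqF.
have minG a : (forall b, G a <= G b) <-> is_prox_min (scalef tau f) (y - tau * c) a.
  split=> H b; first by have := H b; rewrite -(ler_pM2l tau0) !shift lerD2r.
  by rewrite -(ler_pM2l tau0) !shift lerD2r; exact: H.
by split=> [|a /minG]; [apply/minG | exact: Huniq].
Qed.

End ScalarProx.

Section Separable.
Variable R : realType.

Lemma sum_upd k (G : 'I_k -> R -> R) (x : 'I_k -> R) j a :
  \sum_l G l (upd x j a l) = G j a + \sum_(l | l != j) G l (x l).
Proof.
rewrite (bigD1 j) //= /upd eqxx; congr (_ + _).
by apply: eq_bigr => l /negbTE ->.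
Qed.

Lemma is_argmin_separable k (G : 'I_k -> R -> R) (F : ('I_k -> R) -> R) (C : R)
    (u : 'I_k -> R) :
  (forall w, F w = \sum_l G l (w l) + C) ->
  (forall l a, G l (u l) <= G l a) ->
  (forall l a, (forall b, G l a <= G l b) -> a = u l) ->
  is_argmin F u.
Proof.
move=> HF Hmin Huniq w; split=> [Hw | -> w']; last first.
  by rewrite !HF lerD2r; apply: ler_sum => l _; exact: Hmin.
apply/funext => l; apply: Huniq => b; have := Hw (upd w l b).
have wE : \sum_i G i (w i) = \sum_i G i (upd w l (w l) i).
  by apply: eq_bigr => i _; rewrite /upd; case: eqP => // ->.
by rewrite !HF lerD2r wE !sum_upd lerD2r.
Qed.

Lemma wnorm2_half k (tau v : 'I_k -> R) :
  wnorm2 tau v / 2 = \sum_i v i ^+ 2 / tau i / 2.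
Proof.
by rewrite /wnorm2 mulr_suml; apply: eq_bigr => i _; rewrite real_normK ?num_real.
Qed.

End Separable.

Section GampUpdates.
Variables (R : realType) (m n : nat) (A : 'M[R]_(m, n)).
Variables (fx : 'I_n -> R -> R) (fz : 'I_m -> R -> R).

Lemma lagrangian_separable_x x z s : lagrangian A fx fz x z s =
  \sum_j (fx j (x j) + (- mulvT A s j) * x j) + (\sum_i fz i (z i) + \sum_i s i * z i).
Proof.
rewrite /lagrangian /mulvT /mulv.
have -> : \sum_i s i * (z i - \sum_j A i j * x j)
          = \sum_i s i * z i - \sum_j (\sum_i A i j * s i) * x j.
  under eq_bigr do rewrite mulrBr mulr_sumr.
  rewrite sumrB exchange_big /=; congr (_ - _).
  by apply: eq_bigr => j _; rewrite mulr_suml; apply: eq_bigr => i _; ring.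
rewrite big_split /=.
under [X in _ = _ + X + _]eq_bigr do rewrite mulNr.
by rewrite sumrN; ring.
Qed.

Lemma lagrangian_separable_z x z s : lagrangian A fx fz x z s =
  \sum_i (fz i (z i) + s i * z i) + (\sum_j fx j (x j) - \sum_i s i * mulv A x i).
Proof.
rewrite /lagrangian; under [X in _ + X = _]eq_bigr do rewrite mulrBr.
by rewrite sumrB big_split /=; ring.
Qed.

Lemma dL_dxE x z s j : derivable (fx j) (x j) 1 ->
  dL_dx A fx fz x z s j = derive1 (fx j) (x j) - mulvT A s j.
Proof.
move=> df; rewrite /dL_dx.
under eq_fun do rewrite lagrangian_separable_x
  (sum_upd (fun l b => fx l b + (- mulvT A s l) * b)) -addrA.
by rewrite (derive1_val (is_derive_add_linear _ _ df)).
Qed.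

Lemma dL_dzE x z s i : derivable (fz i) (z i) 1 ->
  dL_dz A fx fz x z s i = derive1 (fz i) (z i) + s i.
Proof.
move=> df; rewrite /dL_dz.
under eq_fun do rewrite lagrangian_separable_z
  (sum_upd (fun l b => fz l b + s l * b)) -addrA.
by rewrite (derive1_val (is_derive_add_linear _ _ df)).
Qed.

Hypothesis hproxx : forall j (tau v : R), 0 < tau ->
  exists! u, is_prox_min (scalef tau (fx j)) v u.
Hypothesis hproxz : forall i (tau v : R), 0 < tau ->
  exists! u, is_prox_min (scalef tau (fz i)) v u.

Lemma argmin_lagrangian_x x z s (taur : 'I_n -> R) : (forall j, 0 < taur j) ->
  is_argmin (fun x' => lagrangian A fx fz x' z s
                       + wnorm2 taur (fun j => x' j - x j) / 2)
    (fun j => prox (scalef (taur j) (fx j)) (x j + taur j * mulvT A s j)).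
Proof.
move=> taur0.
have ev l : x l - taur l * - mulvT A s l = x l + taur l * mulvT A s l by ring.
have opt l := prox_argmin_linear_quadratic (taur0 l)
                (hproxx l (x l - taur l * - mulvT A s l) (taur0 l)).
apply: (is_argmin_separable
  (G := fun j a => fx j a + (- mulvT A s j) * a + (a - x j) ^+ 2 / taur j / 2)
  (C := \sum_i fz i (z i) + \sum_i s i * z i)).
- by move=> w; rewrite lagrangian_separable_x wnorm2_half [in RHS]big_split addrAC.
- by move=> l; rewrite -ev; exact: (opt l).1.
- by move=> l; rewrite -ev; exact: (opt l).2.
Qed.

Lemma argmin_lagrangian_z x s (taup : 'I_m -> R) : (forall i, 0 < taup i) ->
  is_argmin (fun z => lagrangian A fx fz x z s
                      + wnorm2 taup (fun i => z i - mulv A x i) / 2)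
    (fun i => prox (scalef (taup i) (fz i)) (mulv A x i - s i * taup i)).
Proof.
move=> taup0.
have ev l : mulv A x l - taup l * s l = mulv A x l - s l * taup l by rewrite mulrC.
have opt l := prox_argmin_linear_quadratic (taup0 l)
                (hproxz l (mulv A x l - taup l * s l) (taup0 l)).
apply: (is_argmin_separable
  (G := fun i a => fz i a + s i * a + (a - mulv A x i) ^+ 2 / taup i / 2)
  (C := \sum_j fx j (x j) - \sum_i s i * mulv A x i)).
- by move=> w; rewrite lagrangian_separable_z wnorm2_half [in RHS]big_split addrAC.
- by move=> l; rewrite -ev; exact: (opt l).1.
- by move=> l; rewrite -ev; exact: (opt l).2.
Qed.

Lemma gamp_step_updates x tx sp :
  let o := gamp_step A fx fz x tx sp in
  let o' := gamp_step A fx fz (g_x o) (g_taux o) (g_s o) in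
  (forall j, 0 < g_taur o j) -> (forall i, 0 < g_taup o' i) ->
  [/\ is_argmin (fun x' => lagrangian A fx fz x' (g_z o) (g_s o)
                           + wnorm2 (g_taur o) (fun j => x' j - x j) / 2) (g_x o),
      is_argmin (fun z => lagrangian A fx fz (g_x o) z (g_s o)
                          + wnorm2 (g_taup o') (fun i => z i - mulv A (g_x o) i) / 2)
                (g_z o')
    & g_s o' = (fun i => g_s o i + (g_z o' i - mulv A (g_x o) i) / g_taup o' i)].
Proof.
move=> o o' taur0 taup0; split.
- exact: argmin_lagrangian_x.
- exact: argmin_lagrangian_z.
- apply/funext => i.
  change (g_s o' i) with
    ((g_z o' i - (mulv A (g_x o) i - g_s o i * g_taup o' i)) / g_taup o' i).
  by field; exact: lt0r_neq0.
Qed.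

End GampUpdates.

Section FixedPoint.
Variables (R : realType) (m n : nat) (A : 'M[R]_(m, n)).
Variables (fx : 'I_n -> R -> R) (fz : 'I_m -> R -> R).
Hypothesis hfx2 : forall j u, derivable (fx j) u 1 /\ derivable (derive1 (fx j)) u 1.
Hypothesis hfz2 : forall i u, derivable (fz i) u 1 /\ derivable (derive1 (fz i)) u 1.
Hypothesis hproxx : forall j (tau v : R), 0 < tau ->
  exists! u, is_prox_min (scalef tau (fx j)) v u.
Hypothesis hproxz : forall i (tau v : R), 0 < tau ->
  exists! u, is_prox_min (scalef tau (fz i)) v u.
Hypothesis hdproxx : forall j (tau v : R), 0 < tau ->
  derivable (prox (scalef tau (fx j))) v 1.
Hypothesis hdproxz : forall i (tau v : R), 0 < tau ->
  derivable (prox (scalef tau (fz i))) v 1.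

Variables (xh : 'I_n -> R) (zh s : 'I_m -> R) (taux : 'I_n -> R) (taus : 'I_m -> R).
Hypothesis fixed : gamp_fixed_point A fx fz xh zh s taux taus.
Let o := gamp_step A fx fz xh taux s.
Hypothesis taup0 : forall i, 0 < g_taup o i.
Hypothesis taur0 : forall j, 0 < g_taur o j.

Lemma fixed_point_feasible : zh = mulv A xh.
Proof.
have [_ _ Hz Hs _] := fixed; apply/funext => i; rewrite -Hz.
apply: (@dual_fixed_point_feasible _ _ (g_p o i) _ (s i) _
         (lt0r_neq0 (taup0 i)) _ erefl).
by rewrite -{1}Hs.
Qed.

Lemma fixed_point_dL_dx j : dL_dx A fx fz xh zh s j = 0.
Proof.
have [Hx _ _ Hs _] := fixed.
rewrite dL_dxE; last exact: (hfx2 j _).1.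
apply/eqP; rewrite subr_eq0; apply/eqP.
apply: (prox_fixed_deriv (taur0 j) (fun u => (hfx2 j u).1)); first exact: hproxx.
by rewrite -[in mulvT A s]Hs; move: Hx => /(congr1 (fun x => x j)).
Qed.

Lemma fixed_point_dL_dz i : dL_dz A fx fz xh zh s i = 0.
Proof.
have [_ _ Hz _ _] := fixed.
have ev : mulv A xh i - s i * g_taup o i = zh i + g_taup o i * - s i.
  by rewrite -fixed_point_feasible; ring.
rewrite dL_dzE; last exact: (hfz2 i _).1.
apply/eqP; rewrite addr_eq0; apply/eqP.
apply: (prox_fixed_deriv (taup0 i) (fun u => (hfz2 i u).1)); first exact: hproxz.
by rewrite -ev; move: Hz => /(congr1 (fun z => z i)).
Qed.

Lemma fixed_point_taux j :
  1 / taux j = derive1n 2 (fx j) (xh j) + mulvT (Smat A) taus j.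
Proof.
have [Hx Htx _ _ Hts] := fixed.
have curv := dprox_curvature (hfx2 j) (fun w => @hproxx j _ w (taur0 j))
               (@hdproxx j _ (g_r o j) (taur0 j)).
change (prox (scalef (g_taur o j) (fx j)) (g_r o j)) with (g_x o j) in curv.
rewrite Hx in curv; rewrite -Htx.
rewrite (inv_scaled_prox_deriv (lt0r_neq0 (taur0 j)) curv).
change (g_taur o j) with (1 / mulvT (Smat A) (g_taus o) j).
by rewrite Hts !div1r invrK.
Qed.

Lemma fixed_point_taus i : derive1n 2 (fz i) (zh i) != 0 ->
  1 / taus i = 1 / derive1n 2 (fz i) (zh i) + mulv (Smat A) taux i.
Proof.
have [_ _ Hz _ Hts] := fixed => dz0.
have curv := dprox_curvature (hfz2 i) (fun w => @hproxz i _ w (taup0 i))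
               (@hdproxz i _ (g_p o i) (taup0 i)).
change (prox (scalef (g_taup o i) (fz i)) (g_p o i)) with (g_z o i) in curv.
rewrite Hz in curv; rewrite -Hts.
exact: (inv_taus_prox_deriv (lt0r_neq0 (taup0 i)) dz0 curv).
Qed.

End FixedPoint.

Section GampIterates.
Variables (R : realType) (m n : nat) (A : 'M[R]_(m, n)).
Variables (fx : 'I_n -> R -> R) (fz : 'I_m -> R -> R) (x0 taux0 : 'I_n -> R).

Lemma gamp_iter_state t : exists tx sp,
  gamp_iter A fx fz x0 taux0 t = gamp_step A fx fz (gamp_x A fx fz x0 taux0 t) tx sp.
Proof. by rewrite /gamp_iter /gamp_x; case: gamp_state => [[x tx] sp]; exists tx, sp. Qed.

Lemma gamp_iterS t : let o := gamp_iter A fx fz x0 taux0 t in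
  gamp_iter A fx fz x0 taux0 t.+1 = gamp_step A fx fz (g_x o) (g_taux o) (g_s o).
Proof. by rewrite /gamp_iter /=; case: gamp_state => [[x tx] sp]. Qed.

Lemma gamp_xS t : gamp_x A fx fz x0 taux0 t.+1 = g_x (gamp_iter A fx fz x0 taux0 t).
Proof. by rewrite /gamp_x /gamp_iter /=; case: gamp_state => [[x tx] sp]. Qed.

End GampIterates.

Theorem theorem1 (R : realType) (m n : nat) (A : 'M[R]_(m, n))
  (fx : 'I_n -> R -> R) (fz : 'I_m -> R -> R)
  (hfx2 : forall j u, derivable (fx j) u 1 /\ derivable (derive1 (fx j)) u 1)
  (hfz2 : forall i u, derivable (fz i) u 1 /\ derivable (derive1 (fz i)) u 1)
  (hproxx : forall j (tau v : R), 0 < tau ->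
     exists! u, is_prox_min (scalef tau (fx j)) v u)
  (hproxz : forall i (tau v : R), 0 < tau ->
     exists! u, is_prox_min (scalef tau (fz i)) v u)
  (hdproxx : forall j (tau v : R), 0 < tau ->
     derivable (prox (scalef tau (fx j))) v 1)
  (hdproxz : forall i (tau v : R), 0 < tau ->
     derivable (prox (scalef tau (fz i))) v 1) :
  (forall (x0 taux0 : 'I_n -> R),
     (forall j, 0 < taux0 j) ->
     (forall t i, 0 < g_taup (gamp_iter A fx fz x0 taux0 t) i) ->
     (forall t j, 0 < g_taur (gamp_iter A fx fz x0 taux0 t) j) ->
     forall t : nat,
       let it := gamp_iter A fx fz x0 taux0 t in
       let it1 := gamp_iter A fx fz x0 taux0 t.+1 in
       let xt := gamp_x A fx fz x0 taux0 t in
       let xt1 := gamp_x A fx fz x0 taux0 t.+1 in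
       [/\ is_argmin (fun x => lagrangian A fx fz x (g_z it) (g_s it)
                              + wnorm2 (g_taur it) (fun j => x j - xt j) / 2)
                     xt1,
           is_argmin (fun z => lagrangian A fx fz xt1 z (g_s it)
                              + wnorm2 (g_taup it1)
                                  (fun i => z i - mulv A xt1 i) / 2)
                     (g_z it1)
         & g_s it1 = (fun i => g_s it i
                        + (g_z it1 i - mulv A xt1 i) / g_taup it1 i)])
  /\
  (forall (xh : 'I_n -> R) (zh s : 'I_m -> R)
          (taux : 'I_n -> R) (taus : 'I_m -> R),
     gamp_fixed_point A fx fz xh zh s taux taus ->
     (forall i, 0 < g_taup (gamp_step A fx fz xh taux s) i) ->
     (forall j, 0 < g_taur (gamp_step A fx fz xh taux s) j) ->
     let dx := fun j => derive1n 2 (fx j) (xh j) in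
     let dz := fun i => derive1n 2 (fz i) (zh i) in
     [/\ zh = mulv A xh,
         (forall j, dL_dx A fx fz xh zh s j = 0),
         (forall i, dL_dz A fx fz xh zh s i = 0),
         (forall j, 1 / taux j = dx j + mulvT (Smat A) taus j)
       & (forall i, dz i != 0 -> 1 / taus i = 1 / dz i + mulv (Smat A) taux i)]).
Proof.
split.
- move=> x0 taux0 _ taup0 taur0 t it it1 xt xt1.
  have [tx [sp itE]] := gamp_iter_state A fx fz x0 taux0 t.
  have taur0t := taur0 t; have taup0t := taup0 t.+1.
  rewrite /it1 /xt1 gamp_iterS gamp_xS /it itE in taur0t taup0t *.
  exact: gamp_step_updates.
- move=> xh zh s taux taus fixed taup0 taur0 dx dz.
  split.
  + exact: (fixed_point_feasible fixed taup0).
  + exact: (fixed_point_dL_dx hfx2 hproxx fixed taur0).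
  + exact: (fixed_point_dL_dz hfz2 hproxz fixed taup0).
  + exact: (fixed_point_taux hfx2 hproxx hdproxx fixed taur0).
  + exact: (fixed_point_taus hfz2 hproxz hdproxz fixed taup0).
Qed.
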